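(* Let $G=A*_C B$ be an amalgamated free product and let $P$ be a normal subsemigroup of $A$ with $P\cap C=\emptyset$. If $n\ge1$, $d_1,\dots,d_n\in P$ and $f_1,\dots,f_n\in G\setminus A$, then $d_1^{f_1}\cdots d_n^{f_n}\notin A$.
   Context: Notation $x^y=y^{-1}xy$. A normal subsemigroup of a group $H$ is a (possibly empty) subset closed under multiplication and under conjugation by elements of $H$. *)

Record Group := {
  carrier :> Type;
  gmul : carrier -> carrier -> carrier;
  gone : carrier;
  ginv : carrier -> carrier;
  gmulA : forall x y z, gmul x (gmul y z) = gmul (gmul x y) z;
  gmul1 : forall x, gmul gone x = x;
  gmulV : forall x, gmul (ginv x) x = gone
}.

Arguments gmul {g}.
Arguments gone {g}.
Arguments ginv {g}.

Definition gconj {G : Group} (x y : G) : G := gmul (ginv y) (gmul x y).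

Definition subgroup {G : Group} (S : G -> Prop) : Prop :=
  S gone /\ (forall x y, S x -> S y -> S (gmul x y)) /\ (forall x, S x -> S (ginv x)).

Definition is_hom {G H : Group} (h : G -> H) : Prop :=
  forall x y, h (gmul x y) = gmul (h x) (h y).

(* G is the (internal) amalgamated free product A *_C B with C = A ∩ B:
   A, B are subgroups of G, and G has the universal property of the pushout:
   any pair of homomorphisms from A and from B to a group H that agree on
   C = A ∩ B extends uniquely to a homomorphism G -> H. *)
Definition is_amalgamated_free_product (G : Group) (A B : G -> Prop) : Prop :=
  subgroup A /\ subgroup B /\
  forall (H : Group) (phi psi : G -> H),
    (forall x y, A x -> A y -> phi (gmul x y) = gmul (phi x) (phi y)) ->
    (forall x y, B x -> B y -> psi (gmul x y) = gmul (psi x) (psi y)) ->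
    (forall c, A c -> B c -> phi c = psi c) ->
    exists h : G -> H,
      is_hom h /\ (forall a, A a -> h a = phi a) /\ (forall b, B b -> h b = psi b) /\
      (forall h' : G -> H, is_hom h' -> (forall a, A a -> h' a = phi a) ->
         (forall b, B b -> h' b = psi b) -> forall x, h' x = h x).

Definition normal_subsemigroup {G : Group} (A P : G -> Prop) : Prop :=
  (forall x, P x -> A x) /\
  (forall x y, P x -> P y -> P (gmul x y)) /\
  (forall x a, P x -> A a -> P (gconj x a)).

Fixpoint iprod {G : Group} (n : nat) (F : nat -> G) : G :=
  match n with
  | O => gone
  | S m => gmul (iprod m F) (F m)
  end.

From Stdlib Require Import List Lia Arith.
From Stdlib Require Import ClassicalEpsilon FunctionalExtensionality.
From Stdlib Require Import ProofIrrelevance PropExtensionality.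
Import ListNotations.

(* G acts on a tree whose vertices are alternating normal-form words of A *_C B, with the
   prefix metric, and the empty word v has stabiliser A. An element p of P fixes v and,
   since no A-conjugate of p lies in C, moves every edge at v: the geodesic from x to p x passes
   through v. A conjugate p^f is then such a rotation about f^-1 v. If d_1^f_1 ... d_n^f_n were
   in A, the walk v, r_1 v, r_1 r_2 v, ... of partial products would return to v. At the first
   point where the walk is farthest from v, the two rotations meeting there can be exchanged, or
   merged when they share their centre (this uses that P is a normal subsemigroup of A), without
   changing the product; this strictly decreases the total distance of the centres from v or,
   failing that, the total length of the walk. The descent stops only when every centre is v,
   that is, every f_i lies in A. *)

Section GroupFacts.
Variable G : Group.
Notation "x ⋅ y" := (@gmul G x y) (at level 40, left associativity).
Notation "1" := (@gone G).

Lemma mulgV (x : G) : x ⋅ ginv x = 1.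
Proof.
  rewrite <- (gmul1 G (x ⋅ ginv x)), <- (gmulV G (ginv x)) at 1.
  rewrite <- gmulA, (gmulA G (ginv x) x (ginv x)), gmulV, gmul1. apply gmulV.
Qed.

Lemma mulg1 (x : G) : x ⋅ 1 = x.
Proof. rewrite <- (gmulV G x), gmulA, mulgV, gmul1. reflexivity. Qed.

Lemma mulKg (x y : G) : ginv x ⋅ (x ⋅ y) = y.
Proof. rewrite gmulA, gmulV, gmul1. reflexivity. Qed.

Lemma mulVKg (x y : G) : x ⋅ (ginv x ⋅ y) = y.
Proof. rewrite gmulA, mulgV, gmul1. reflexivity. Qed.

Lemma mulg_cancel_l (x y z : G) : x ⋅ y = x ⋅ z -> y = z.
Proof. intro H. rewrite <- (mulKg x y), H, mulKg. reflexivity. Qed.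

Lemma eq_invg_mul (x y : G) : x ⋅ y = 1 -> y = ginv x.
Proof. intro H. apply (mulg_cancel_l x). rewrite H, mulgV. reflexivity. Qed.

Lemma invgK (x : G) : ginv (ginv x) = x.
Proof. symmetry. apply eq_invg_mul, gmulV. Qed.

Lemma invMg (x y : G) : ginv (x ⋅ y) = ginv y ⋅ ginv x.
Proof.
  symmetry. apply eq_invg_mul.
  rewrite <- gmulA, (gmulA G y), mulgV, gmul1, mulgV. reflexivity.
Qed.

Lemma invg1 : ginv (1) = 1.
Proof. symmetry. apply eq_invg_mul, gmul1. Qed.

Lemma mulg_idem (x : G) : x ⋅ x = x -> x = 1.
Proof. intro H. apply (mulg_cancel_l x). rewrite H, mulg1. reflexivity. Qed.

End GroupFacts.

Ltac gsimpl :=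
  repeat rewrite ?invMg, ?invgK, <- ?gmulA, ?mulKg, ?mulVKg, ?mulgV, ?gmulV, ?mulg1, ?gmul1.

Lemma subgroup_of_inv {G : Group} (S : G -> Prop) (x : G) :
  subgroup S -> S (ginv x) -> S x.
Proof. intros HS H. rewrite <- (invgK G x). apply HS, H. Qed.

Lemma gconjM {G : Group} (x y z : G) : gconj x (gmul y z) = gconj (gconj x y) z.
Proof. unfold gconj. gsimpl. reflexivity. Qed.

Section ConjugateRotations.
Variable G : Group.
Notation "x ⋅ y" := (@gmul G x y) (at level 40, left associativity).
Notation "1" := (@gone G).
Variables A P : G -> Prop.
Hypothesis P_mul : forall x y, P x -> P y -> P (x ⋅ y).
Hypothesis P_conj : forall x a, P x -> A a -> P (gconj x a).
Variable X : Type.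
Variable act : G -> X -> X.
Hypothesis act_mul : forall g k x, act (g ⋅ k) x = act g (act k x).
Hypothesis act1 : forall x, act 1 x = x.
Variable d : X -> X -> nat.
Hypothesis d_sym : forall x y, d x y = d y x.
Hypothesis d_xx : forall x, d x x = 0.
Hypothesis d_eq0 : forall x y, d x y = 0 -> x = y.
Hypothesis d_tri : forall x y z, d x z <= d x y + d y z.
Hypothesis d_four : forall x y z w,
  d x y + d z w <= Nat.max (d x z + d y w) (d x w + d y z).
Hypothesis d_act : forall g x y, d (act g x) (act g y) = d x y.
Variable v : X.
Hypothesis stab_A : forall g, act g v = v -> A g.
(* Elements of P are rotations about v: the geodesic from x to p x passes through v. *)
Hypothesis P_rotation : forall p, P p -> forall x, d x (act p x) = d v x + d v x.

Lemma act_invK g x : act (ginv g) (act g x) = x.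
Proof. rewrite <- act_mul, gmulV, act1. reflexivity. Qed.

Lemma act_Kinv g x : act g (act (ginv g) x) = x.
Proof. rewrite <- act_mul, mulgV, act1. reflexivity. Qed.

Lemma dist_midpoint o p q p' L : d p q = L -> d q p' = L -> d p p' = L + L ->
  d o q + L = Nat.max (d o p) (d o p').
Proof.
  intros Hpq Hqp' Hpp'.
  pose proof (d_four o q p p'). pose proof (d_tri o q p). pose proof (d_tri o q p').
  rewrite (d_sym q p) in *. lia.
Qed.

(* A pair (f, p) stands for the conjugate p^f, a rotation about the point f^-1 v. *)
Definition conj_pair (z : G * G) : G := gconj (snd z) (fst z).
Definition pivot (z : G * G) : X := act (ginv (fst z)) v.
Definition depth (z : G * G) : nat := d v (pivot z).

Section Pair.
Variable z : G * G.
Hypothesis Pz : P (snd z).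

Lemma dist_conj_pair x : d x (act (conj_pair z) x) = d (pivot z) x + d (pivot z) x.
Proof.
  unfold conj_pair, gconj, pivot. rewrite !act_mul.
  rewrite <- (d_act (fst z)), act_Kinv, P_rotation by exact Pz.
  rewrite <- (d_act (ginv (fst z)) v), act_invK. reflexivity.
Qed.

Lemma conj_pair_fix_pivot : act (conj_pair z) (pivot z) = pivot z.
Proof. symmetry. apply d_eq0. rewrite dist_conj_pair, d_xx. reflexivity. Qed.

Lemma conj_pair_inv_fix_pivot : act (ginv (conj_pair z)) (pivot z) = pivot z.
Proof. rewrite <- conj_pair_fix_pivot at 1. apply act_invK. Qed.

Lemma dist_pivot_image : d (pivot z) (act (conj_pair z) v) = depth z.
Proof. unfold depth. rewrite <- conj_pair_fix_pivot at 1. rewrite d_act, d_sym. reflexivity. Qed.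

Lemma disp_conj_pair : d v (act (conj_pair z) v) = depth z + depth z.
Proof. rewrite dist_conj_pair. unfold depth. rewrite d_sym. reflexivity. Qed.

End Pair.

Definition all_P (L : list (G * G)) : Prop := Forall (fun z => P (snd z)) L.

Fixpoint cprod (L : list (G * G)) : G :=
  match L with [] => 1 | z :: L' => conj_pair z ⋅ cprod L' end.

Fixpoint total_depth (L : list (G * G)) : nat :=
  match L with [] => 0 | z :: L' => depth z + total_depth L' end.

Definition disp (g : G) : nat := d v (act g v).

(* Distances from v along the walk g v, g r_1 v, g r_1 r_2 v, ..., where r_i = conj_pair z_i. *)
Fixpoint max_disp (g : G) (L : list (G * G)) : nat :=
  match L with [] => disp g | z :: L' => Nat.max (disp g) (max_disp (g ⋅ conj_pair z) L') end.

Fixpoint sum_disp (g : G) (L : list (G * G)) : nat :=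
  match L with [] => disp g | z :: L' => disp g + sum_disp (g ⋅ conj_pair z) L' end.

Lemma cprod_app L1 L2 : cprod (L1 ++ L2) = cprod L1 ⋅ cprod L2.
Proof. induction L1 as [|z L1 IH]; simpl; [rewrite gmul1 | rewrite IH, gmulA]; reflexivity. Qed.

Lemma total_depth_app L1 L2 : total_depth (L1 ++ L2) = total_depth L1 + total_depth L2.
Proof. induction L1; simpl; lia. Qed.

Lemma depth_le_total z L : In z L -> depth z <= total_depth L.
Proof. induction L as [|z' L IH]; simpl; [tauto|]. intros [<-|H]; [|specialize (IH H)]; lia. Qed.

Lemma sum_disp_app_lt g L1 L2 L2' :
  sum_disp (g ⋅ cprod L1) L2 < sum_disp (g ⋅ cprod L1) L2' ->
  sum_disp g (L1 ++ L2) < sum_disp g (L1 ++ L2').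
Proof.
  revert g; induction L1 as [|z L1 IH]; intros g H; simpl in *.
  - rewrite mulg1 in H. exact H.
  - rewrite gmulA in H. specialize (IH _ H). lia.
Qed.

Lemma disp1 : disp 1 = 0.
Proof. unfold disp. rewrite act1. apply d_xx. Qed.

Lemma max_disp_ge g L : disp g <= max_disp g L.
Proof. destruct L; simpl; lia. Qed.

Lemma max_disp_prefix g L1 L2 : disp (g ⋅ cprod L1) <= max_disp g (L1 ++ L2).
Proof.
  revert g; induction L1 as [|z L1 IH]; intro g; simpl.
  - rewrite mulg1. apply max_disp_ge.
  - specialize (IH (g ⋅ conj_pair z)). rewrite <- gmulA in IH. lia.
Qed.

Lemma max_disp_first_peak g L : disp g < max_disp g L ->
  exists L1 z L2, L = L1 ++ z :: L2 /\ disp (g ⋅ cprod L1) < max_disp g L /\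
    disp (g ⋅ cprod L1 ⋅ conj_pair z) = max_disp g L.
Proof.
  revert g; induction L as [|z L IH]; intros g H; simpl in H; [lia|].
  assert (Hm : max_disp g (z :: L) = max_disp (g ⋅ conj_pair z) L) by (simpl; lia).
  rewrite Hm in *.
  destruct (Nat.eq_dec (disp (g ⋅ conj_pair z)) (max_disp (g ⋅ conj_pair z) L)) as [E|E].
  - exists [], z, L. simpl. rewrite mulg1. split; [reflexivity|]. split; [lia|exact E].
  - pose proof (max_disp_ge (g ⋅ conj_pair z) L).
    destruct (IH (g ⋅ conj_pair z)) as [L1 [z' [L2 [-> [H1 H2]]]]]; [lia|].
    exists (z :: L1), z', L2. simpl. rewrite <- !gmulA in *. auto.
Qed.

Lemma max_disp_zero g L : all_P L -> max_disp g L = 0 -> total_depth L = 0.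
Proof.
  revert g; induction L as [|z L IH]; intros g HL H; simpl in *; [reflexivity|].
  inversion HL as [|? ? Pz HL']; subst.
  pose proof (max_disp_ge (g ⋅ conj_pair z) L).
  assert (E1 : act g v = v) by (apply d_eq0; rewrite d_sym; unfold disp in *; lia).
  assert (E2 : act (g ⋅ conj_pair z) v = v) by (apply d_eq0; rewrite d_sym; unfold disp in *; lia).
  rewrite act_mul in E2.
  assert (depth z + depth z = 0).
  { rewrite <- disp_conj_pair by exact Pz. rewrite <- (d_act g), E1, E2. apply d_xx. }
  rewrite (IH (g ⋅ conj_pair z)); auto; lia.
Qed.

Section Exchange.
Variables (y : G) (x1 x2 : G * G).
Hypotheses (P1 : P (snd x1)) (P2 : P (snd x2)).
Hypothesis disp_rise : disp y < disp (y ⋅ conj_pair x1).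
Hypothesis disp_peak : disp (y ⋅ conj_pair x1 ⋅ conj_pair x2) <= disp (y ⋅ conj_pair x1).

(* p0, p1, p2 are consecutive points of the walk, p1 the first farthest from v; q1 and q2 are the
   centres of the two rotations. *)
Local Notation r1 := (conj_pair x1).
Local Notation r2 := (conj_pair x2).
Local Notation a := (depth x1).
Local Notation b := (depth x2).
Local Notation D := (disp (y ⋅ r1)).
Local Notation p0 := (act y v).
Local Notation p1 := (act (y ⋅ r1) v).
Local Notation p2 := (act (y ⋅ r1 ⋅ r2) v).
Local Notation q1 := (act y (pivot x1)).
Local Notation q2 := (act (y ⋅ r1) (pivot x2)).

Lemma dist_p0_q1 : d p0 q1 = a.
Proof. rewrite d_act. reflexivity. Qed.

Lemma dist_q1_p1 : d q1 p1 = a.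
Proof. rewrite act_mul, d_act. apply dist_pivot_image, P1. Qed.

Lemma dist_p0_p1 : d p0 p1 = a + a.
Proof. rewrite act_mul, d_act. apply disp_conj_pair, P1. Qed.

Lemma dist_p1_q2 : d p1 q2 = b.
Proof. rewrite d_act. reflexivity. Qed.

Lemma dist_q2_p2 : d q2 p2 = b.
Proof. rewrite (act_mul (y ⋅ r1) r2), d_act. apply dist_pivot_image, P2. Qed.

Lemma dist_p1_p2 : d p1 p2 = b + b.
Proof. rewrite (act_mul (y ⋅ r1) r2), d_act. apply disp_conj_pair, P2. Qed.

Lemma depth_rise_pos : 0 < a.
Proof.
  destruct (Nat.eq_dec a 0) as [E|E]; [|lia].
  pose proof dist_p0_p1 as H. rewrite E in H. apply d_eq0 in H.
  unfold disp in disp_rise. rewrite H in disp_rise. lia.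
Qed.

Lemma dist_v_q1 : d v q1 + a = D.
Proof.
  rewrite (dist_midpoint v p0 q1 p1 a dist_p0_q1 dist_q1_p1 dist_p0_p1).
  unfold disp in *. lia.
Qed.

Lemma dist_v_q2 : d v q2 + b = D.
Proof.
  rewrite (dist_midpoint v p1 q2 p2 b dist_p1_q2 dist_q2_p2 dist_p1_p2).
  unfold disp in *. lia.
Qed.

(* Both pivots lie on the geodesic from p1 towards v, at distances a and b from p1. *)
Lemma dist_pivots : d q1 q2 + a <= b \/ d q1 q2 + b <= a.
Proof.
  pose proof (d_four q1 q2 v p1) as F. pose proof dist_v_q1. pose proof dist_v_q2.
  pose proof dist_q1_p1. pose proof dist_p1_q2.
  rewrite (d_sym q1 v), (d_sym q2 p1), (d_sym q2 v) in F. unfold disp in *. lia.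
Qed.

Definition exchange_spec (M : list (G * G)) : Prop :=
  all_P M /\ cprod M = r1 ⋅ r2 /\ 0 < total_depth M /\
  (total_depth M < a + b \/
   (total_depth M = a + b /\ forall L, sum_disp y (M ++ L) < sum_disp y (x1 :: x2 :: L))).

Lemma exchange_shallow_first : a < b -> exists M, exchange_spec M.
Proof.
  intro Hab. set (z := (fst x2 ⋅ ginv r1, snd x2)).
  assert (Hz : depth z = d p0 q2).
  { unfold depth, pivot, z. simpl. rewrite invMg, invgK, act_mul, <- (d_act y), act_mul.
    reflexivity. }
  assert (Hlt : d p0 q2 < b).
  { pose proof (d_four p0 q2 v q1) as F. pose proof dist_pivots. pose proof dist_v_q1.
    pose proof dist_v_q2. pose proof dist_p0_q1.
    rewrite (d_sym p0 v), (d_sym q2 v), (d_sym q2 q1) in F. unfold disp in *. lia. }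
  pose proof depth_rise_pos.
  exists [z; x1]. repeat split.
  - repeat constructor; assumption.
  - simpl. rewrite mulg1. unfold z, conj_pair at 1, gconj. simpl. gsimpl. reflexivity.
  - simpl. lia.
  - left. simpl. lia.
Qed.

Lemma exchange_merge : a = b -> exists M, exchange_spec M.
Proof.
  intro Hab. pose proof depth_rise_pos.
  assert (Hq : q1 = q2) by (apply d_eq0; pose proof dist_pivots; lia).
  assert (Hu : pivot x2 = pivot x1).
  { rewrite act_mul in Hq. apply (f_equal (act (ginv y))) in Hq. rewrite !act_invK in Hq.
    rewrite <- (act_invK r1 (pivot x2)), <- Hq. apply conj_pair_inv_fix_pivot, P1. }
  assert (HA : A (fst x2 ⋅ ginv (fst x1))).
  { apply stab_A. rewrite act_mul. change (act (ginv (fst x1)) v) with (pivot x1).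
    rewrite <- Hu. apply act_Kinv. }
  set (z := (fst x1, snd x1 ⋅ gconj (snd x2) (fst x2 ⋅ ginv (fst x1)))).
  exists [z]. repeat split.
  - repeat constructor. apply P_mul; auto.
  - simpl. rewrite mulg1. unfold z, conj_pair, gconj. simpl. gsimpl. reflexivity.
  - change (total_depth [z]) with (a + 0). lia.
  - left. change (total_depth [z]) with (a + 0). lia.
Qed.

(* Moving the shallower rotation first brings the walk through y r2 v, strictly closer to v. *)
Lemma disp_swap_lt : b < a -> disp (y ⋅ r2) < D.
Proof.
  intro Hab.
  set (t := act y (pivot x2)). set (N := act (y ⋅ r2) v).
  assert (E1 : d p0 t = b) by (unfold t; rewrite d_act; reflexivity).
  assert (E2 : d t N = b).
  { unfold t, N. rewrite act_mul, d_act. apply dist_pivot_image, P2. }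
  assert (E3 : d p0 N = b + b).
  { unfold N. rewrite act_mul, d_act. apply disp_conj_pair, P2. }
  pose proof (dist_midpoint v p0 t N b E1 E2 E3) as Mid.
  assert (Hqt : d q1 t = d q1 q2).
  { unfold t. rewrite d_act, act_mul, d_act.
    rewrite <- (conj_pair_fix_pivot x1 P1) at 2. rewrite d_act. reflexivity. }
  pose proof (d_four v t q1 p0) as F. pose proof dist_pivots. pose proof dist_v_q1.
  pose proof dist_p0_q1.
  rewrite (d_sym t p0), (d_sym q1 p0), (d_sym t q1) in F. unfold disp in *. fold N. lia.
Qed.

Lemma exchange_deep_first : b < a -> exists M, exchange_spec M.
Proof.
  intro Hab. set (z := (fst x1 ⋅ r2, snd x1)).
  assert (Hz : depth z = d p2 q1).
  { unfold depth, pivot, z. simpl. rewrite invMg, act_mul.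
    rewrite <- (d_act r2), act_Kinv, <- (d_act (y ⋅ r1)), <- (act_mul (y ⋅ r1) r2).
    change (act (ginv (fst x1)) v) with (pivot x1).
    rewrite (act_mul y r1 (pivot x1)), conj_pair_fix_pivot by exact P1. reflexivity. }
  assert (Hle : d p2 q1 <= a).
  { pose proof (d_tri p2 q2 q1). pose proof dist_pivots. pose proof dist_q2_p2.
    rewrite (d_sym p2 q2), (d_sym q2 q1) in *. lia. }
  assert (Hr : r2 ⋅ conj_pair z = r1 ⋅ r2).
  { change (conj_pair z) with (gconj (snd x1) (fst x1 ⋅ r2)).
    rewrite gconjM. change (gconj (snd x1) (fst x1)) with r1.
    unfold gconj at 1. gsimpl. reflexivity. }
  exists [x2; z]. repeat split.
  - repeat constructor; assumption.
  - simpl. rewrite mulg1. exact Hr.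
  - simpl. rewrite Hz. destruct (Nat.eq_dec b 0) as [Eb|Eb]; [|lia].
    pose proof dist_p1_p2 as H. rewrite Eb in H. apply d_eq0 in H.
    rewrite <- H, d_sym, dist_q1_p1. pose proof depth_rise_pos. lia.
  - simpl. rewrite Hz. destruct (Nat.lt_ge_cases (d p2 q1) a) as [Hlt|Hge]; [left; lia|right].
    split; [lia|]. intro L. rewrite <- (gmulA G y r2), Hr, gmulA.
    pose proof (disp_swap_lt Hab). lia.
Qed.

Lemma exchange : exists M, exchange_spec M.
Proof.
  destruct (lt_eq_lt_dec a b) as [[H|H]|H].
  - exact (exchange_shallow_first H).
  - exact (exchange_merge H).
  - exact (exchange_deep_first H).
Qed.

End Exchange.

Lemma descent_step L : all_P L -> act (cprod L) v = v -> 0 < total_depth L ->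
  exists L', all_P L' /\ cprod L' = cprod L /\ 0 < total_depth L' /\
    (total_depth L' < total_depth L \/
     (total_depth L' = total_depth L /\ sum_disp 1 L' < sum_disp 1 L)).
Proof.
  intros HL Hfix Hpos.
  assert (Hmax : disp 1 < max_disp 1 L).
  { rewrite disp1. destruct (Nat.eq_dec (max_disp 1 L) 0) as [E|E]; [|lia].
    pose proof (max_disp_zero 1 L HL E). lia. }
  destruct (max_disp_first_peak 1 L Hmax) as [L1 [x1 [L2 [-> [Hrise Hpeak]]]]].
  rewrite gmul1 in Hrise, Hpeak.
  destruct L2 as [|x2 L3].
  { rewrite cprod_app in Hfix. simpl in Hfix. rewrite mulg1 in Hfix.
    unfold disp in Hpeak. rewrite Hfix, d_xx in Hpeak. lia. }
  assert (Hnext : disp (cprod L1 ⋅ conj_pair x1 ⋅ conj_pair x2) <=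
                  max_disp 1 (L1 ++ x1 :: x2 :: L3)).
  { pose proof (max_disp_prefix 1 (L1 ++ [x1; x2]) L3) as H.
    rewrite <- app_assoc, cprod_app, gmul1 in H. simpl in H. rewrite mulg1, gmulA in H. exact H. }
  unfold all_P in HL. rewrite Forall_app in HL. destruct HL as [HL1 HL2].
  inversion HL2 as [|? ? P1 HL2']; inversion HL2' as [|? ? P2 HL3]; subst.
  destruct (exchange (cprod L1) x1 x2 P1 P2 ltac:(lia) ltac:(lia))
    as [M [HM [HprodM [HposM Hdec]]]].
  exists (L1 ++ M ++ L3). split; [|split; [|split]].
  - unfold all_P. rewrite !Forall_app. auto.
  - rewrite !cprod_app, HprodM. simpl. rewrite !gmulA. reflexivity.
  - rewrite !total_depth_app. lia.
  - rewrite !total_depth_app. simpl. destruct Hdec as [Hlt|[Heq Hsum]]; [left; lia|right].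
    split; [lia|]. apply sum_disp_app_lt. rewrite gmul1. apply Hsum.
Qed.

Theorem cprod_fix_total_depth L : all_P L -> act (cprod L) v = v -> total_depth L = 0.
Proof.
  intros HL Hfix.
  destruct (Nat.eq_dec (total_depth L) 0) as [E|E]; [exact E|exfalso].
  remember (total_depth L) as m eqn:Em. remember (sum_disp 1 L) as k eqn:Ek.
  revert L k HL Hfix E Em Ek.
  induction m as [m IHm] using lt_wf_ind. intros L k. revert L.
  induction k as [k IHk] using lt_wf_ind. intros L HL Hfix E Em Ek.
  destruct (descent_step L HL Hfix) as [L' [HL' [Hprod [Hpos Hdec]]]]; [lia|].
  rewrite <- Hprod in Hfix.
  destruct Hdec as [Hlt|[Heq Hlt]].
  - exact (IHm (total_depth L') ltac:(lia) L' _ HL' Hfix ltac:(lia) eq_refl eq_refl).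
  - exact (IHk (sum_disp 1 L') ltac:(lia) L' HL' Hfix ltac:(lia) ltac:(lia) eq_refl).
Qed.

Corollary cprod_fix_conjugators_in_A L z : all_P L -> act (cprod L) v = v -> In z L -> A (fst z).
Proof.
  intros HL Hfix Hz.
  pose proof (depth_le_total z L Hz) as H. rewrite cprod_fix_total_depth in H by assumption.
  assert (Hp : pivot z = v) by (symmetry; apply d_eq0; unfold depth in H; lia).
  apply stab_A. rewrite <- Hp at 1. apply act_Kinv.
Qed.

End ConjugateRotations.

Definition pdec (Q : Prop) : {Q} + {~ Q} := excluded_middle_informative Q.

Section PrefixMetric.
Context {T : Type}.

Fixpoint lcp (l l' : list T) : nat :=
  match l, l' with
  | s :: r, s' :: r' => if pdec (s = s') then S (lcp r r') else 0
  | _, _ => 0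
  end.

(* The path metric of the tree of finite words over T, rooted at the empty word. *)
Definition word_dist (l l' : list T) : nat := length l + length l' - 2 * lcp l l'.

Lemma lcp_le l l' : lcp l l' <= length l /\ lcp l l' <= length l'.
Proof.
  revert l'; induction l as [|s r IH]; intros [|s' r']; simpl; try lia.
  destruct (pdec (s = s')); simpl; [specialize (IH r')|]; lia.
Qed.

Lemma lcpC l l' : lcp l l' = lcp l' l.
Proof.
  revert l'; induction l as [|s r IH]; intros [|s' r']; simpl; auto.
  destruct (pdec (s = s')), (pdec (s' = s)); subst; try congruence; auto.
Qed.

Lemma lcp_xx l : lcp l l = length l.
Proof. induction l as [|s r IH]; simpl; auto. destruct (pdec (s = s)); congruence. Qed.

Lemma lcp_full l l' : lcp l l' = length l -> length l = length l' -> l = l'.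
Proof.
  revert l'; induction l as [|s r IH]; intros [|s' r']; simpl; intros H1 H2; try lia; auto.
  destruct (pdec (s = s')) as [<-|]; [f_equal; apply IH|]; lia.
Qed.

Lemma lcp_min x y z : Nat.min (lcp x y) (lcp y z) <= lcp x z.
Proof.
  revert y z; induction x as [|s r IH]; intros [|s' r'] [|s'' r'']; simpl; try lia.
  destruct (pdec (s = s')), (pdec (s' = s'')), (pdec (s = s'')); subst; try congruence;
    simpl; try lia.
  specialize (IH r' r''). lia.
Qed.

Lemma lcp_four_max x y z w :
  lcp x z <= lcp x y -> lcp x w <= lcp x y -> lcp y z <= lcp x y -> lcp y w <= lcp x y ->
  lcp x z + lcp y w = lcp x w + lcp y z /\ lcp x z + lcp y w <= lcp x y + lcp z w.
Proof.
  intros H1 H2 H3 H4.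
  (* Each of z, w branches off the common prefix of x and y at the same depth for x and y. *)
  assert (Ez : lcp x z = lcp y z).
  { pose proof (lcp_min y x z). pose proof (lcp_min x y z). pose proof (lcp_min x z y).
    rewrite (lcpC y x), (lcpC z y) in *. lia. }
  assert (Ew : lcp x w = lcp y w).
  { pose proof (lcp_min y x w). pose proof (lcp_min x y w). pose proof (lcp_min x w y).
    rewrite (lcpC y x), (lcpC w y) in *. lia. }
  pose proof (lcp_min z x w). rewrite (lcpC z x) in *. lia.
Qed.

Lemma max_of_six (a b c d e f : nat) : exists m,
  a <= m /\ b <= m /\ c <= m /\ d <= m /\ e <= m /\ f <= m /\
  (m = a \/ m = b \/ m = c \/ m = d \/ m = e \/ m = f).
Proof. exists (Nat.max (Nat.max (Nat.max a b) (Nat.max c d)) (Nat.max e f)). lia. Qed.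

Lemma lcp_four x y z w :
  Nat.min (lcp x z + lcp y w) (lcp x w + lcp y z) <= lcp x y + lcp z w.
Proof.
  pose proof (lcpC y x). pose proof (lcpC w z). pose proof (lcpC z x).
  pose proof (lcpC w y). pose proof (lcpC w x). pose proof (lcpC z y).
  destruct (max_of_six (lcp x y) (lcp z w) (lcp x z) (lcp y w) (lcp x w) (lcp y z))
    as [m [? [? [? [? [? [? Hm]]]]]]].
  destruct Hm as [Hm|[Hm|[Hm|[Hm|[Hm|Hm]]]]]; subst m.
  - destruct (lcp_four_max x y z w); lia.
  - destruct (lcp_four_max z w x y); lia.
  - destruct (lcp_four_max x z y w); lia.
  - destruct (lcp_four_max y w x z); lia.
  - destruct (lcp_four_max x w y z); lia.
  - destruct (lcp_four_max y z x w); lia.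
Qed.

Lemma word_dist_lcp x y : word_dist x y + 2 * lcp x y = length x + length y.
Proof. unfold word_dist. pose proof (lcp_le x y). lia. Qed.

Lemma word_distC x y : word_dist x y = word_dist y x.
Proof. unfold word_dist. rewrite lcpC. lia. Qed.

Lemma word_dist_xx x : word_dist x x = 0.
Proof. unfold word_dist. rewrite lcp_xx. lia. Qed.

Lemma word_dist_eq0 x y : word_dist x y = 0 -> x = y.
Proof. unfold word_dist. intro H. pose proof (lcp_le x y). apply lcp_full; lia. Qed.

Lemma word_dist_tri x y z : word_dist x z <= word_dist x y + word_dist y z.
Proof.
  pose proof (word_dist_lcp x y). pose proof (word_dist_lcp y z). pose proof (word_dist_lcp x z).
  pose proof (lcp_le x y). pose proof (lcp_le y z). pose proof (lcp_min x y z). lia.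
Qed.

Lemma word_dist_four x y z w :
  word_dist x y + word_dist z w <=
  Nat.max (word_dist x z + word_dist y w) (word_dist x w + word_dist y z).
Proof.
  pose proof (lcp_four x y z w).
  pose proof (word_dist_lcp x y). pose proof (word_dist_lcp z w). pose proof (word_dist_lcp x z).
  pose proof (word_dist_lcp y w). pose proof (word_dist_lcp x w). pose proof (word_dist_lcp y z).
  lia.
Qed.

Lemma word_dist_nil l : word_dist [] l = length l.
Proof. unfold word_dist. simpl. lia. Qed.

Lemma word_dist_cons (s : T) r r' : word_dist (s :: r) (s :: r') = word_dist r r'.
Proof.
  unfold word_dist. cbn [lcp length]. destruct (pdec (s = s)); [lia|congruence].
Qed.

Lemma word_dist_head_neq (l l' : list T) :
  (forall s r s' r', l = s :: r -> l' = s' :: r' -> s <> s') ->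
  word_dist l l' = length l + length l'.
Proof.
  intro H. unfold word_dist. destruct l as [|s r], l' as [|s' r']; cbn [lcp length]; try lia.
  destruct (pdec (s = s')) as [E|_]; [exfalso; exact (H s r s' r' eq_refl eq_refl E)|lia].
Qed.

End PrefixMetric.

Section NormalForms.
Variable G : Group.
Notation "x ⋅ y" := (@gmul G x y) (at level 40, left associativity).
Notation "1" := (@gone G).
Variables A B : G -> Prop.
Hypothesis HA : subgroup A.
Hypothesis HB : subgroup B.

Definition C (x : G) : Prop := A x /\ B x.

Lemma A_one : A 1. Proof. apply HA. Qed.
Lemma A_mul x y : A x -> A y -> A (x ⋅ y). Proof. apply HA. Qed.
Lemma A_inv x : A x -> A (ginv x). Proof. apply HA. Qed.
Lemma B_one : B 1. Proof. apply HB. Qed.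
Lemma B_mul x y : B x -> B y -> B (x ⋅ y). Proof. apply HB. Qed.
Lemma B_inv x : B x -> B (ginv x). Proof. apply HB. Qed.
Lemma C_one : C 1. Proof. split; [apply A_one|apply B_one]. Qed.
Lemma C_mul x y : C x -> C y -> C (x ⋅ y).
Proof. intros [] []; split; [apply A_mul|apply B_mul]; auto. Qed.
Lemma C_inv x : C x -> C (ginv x).
Proof. intros []; split; [apply A_inv|apply B_inv]; auto. Qed.

Lemma C_mul_l c x : C c -> C (c ⋅ x) -> C x.
Proof. intros Hc H. rewrite <- (mulKg G c x). apply C_mul; [apply C_inv|]; auto. Qed.

(* A transversal of the left cosets g C, choosing 1 on C itself. *)
Definition rep (g : G) : G :=
  epsilon (inhabits (@gone G)) (fun y => C (ginv g ⋅ y) /\ (C g -> y = 1)).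

Lemma rep_spec g : C (ginv g ⋅ rep g) /\ (C g -> rep g = 1).
Proof.
  unfold rep. apply epsilon_spec. destruct (classic (C g)) as [Hc|Hc].
  - exists 1. split; [|auto]. rewrite mulg1. apply C_inv, Hc.
  - exists g. split; [|tauto]. rewrite gmulV. apply C_one.
Qed.

Lemma rep_coset g : C (ginv g ⋅ rep g). Proof. apply rep_spec. Qed.
Lemma rep_C g : C g -> rep g = 1. Proof. apply rep_spec. Qed.

Lemma rep_cosetV g : C (ginv (rep g) ⋅ g).
Proof.
  replace (ginv (rep g) ⋅ g) with (ginv (ginv g ⋅ rep g)) by (gsimpl; reflexivity).
  apply C_inv, rep_coset.
Qed.

Lemma rep_mulC g c : C c -> rep (g ⋅ c) = rep g.
Proof.
  intro Hc. unfold rep. f_equal. apply functional_extensionality. intro y.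
  apply propositional_extensionality. rewrite invMg.
  split; intros [H1 H2]; split.
  - replace (ginv g ⋅ y) with (c ⋅ (ginv c ⋅ ginv g ⋅ y)) by (gsimpl; reflexivity).
    apply C_mul; auto.
  - intro Hg. apply H2, C_mul; auto.
  - rewrite <- gmulA. apply C_mul; [apply C_inv|]; auto.
  - intro Hg. apply H2. replace g with (g ⋅ c ⋅ ginv c) by (gsimpl; reflexivity).
    apply C_mul; [|apply C_inv]; auto.
Qed.

Lemma rep_eq g g' : C (ginv g ⋅ g') -> rep g' = rep g.
Proof.
  intro H. replace g' with (g ⋅ (ginv g ⋅ g')) by (gsimpl; reflexivity).
  apply rep_mulC, H.
Qed.

Lemma rep_eq_C g g' : rep g = rep g' -> C (ginv g ⋅ g').
Proof.
  intro E. pose proof (rep_coset g) as H1. pose proof (rep_cosetV g') as H2. rewrite <- E in H2.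
  replace (ginv g ⋅ g') with ((ginv g ⋅ rep g) ⋅ (ginv (rep g) ⋅ g')) by (gsimpl; reflexivity).
  apply C_mul; auto.
Qed.

Lemma rep_idem g : rep (rep g) = rep g.
Proof. apply rep_eq, rep_coset. Qed.

Lemma rep_A g : A g -> A (rep g).
Proof.
  intro H. replace (rep g) with (g ⋅ (ginv g ⋅ rep g)) by (gsimpl; reflexivity).
  apply A_mul; [exact H|apply rep_coset].
Qed.

Lemma rep_B g : B g -> B (rep g).
Proof.
  intro H. replace (rep g) with (g ⋅ (ginv g ⋅ rep g)) by (gsimpl; reflexivity).
  apply B_mul; [exact H|apply rep_coset].
Qed.

Lemma rep_notC g : ~ C g -> ~ C (rep g).
Proof.
  intros H Hr. apply H. replace g with (rep g ⋅ (ginv (rep g) ⋅ g)) by (gsimpl; reflexivity).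
  apply C_mul; [exact Hr|apply rep_cosetV].
Qed.

Lemma rep_inj_mul g s s' : rep s = s -> rep s' = s' -> rep (g ⋅ s) = rep (g ⋅ s') -> s = s'.
Proof.
  intros Hs Hs' E. apply rep_eq_C in E. rewrite invMg in E.
  replace (ginv s ⋅ ginv g ⋅ (g ⋅ s')) with (ginv s ⋅ s') in E by (gsimpl; reflexivity).
  rewrite <- Hs, <- Hs'. symmetry. apply rep_eq, E.
Qed.

Lemma rep_fixed_C s : rep s = s -> C s -> s = 1.
Proof. intros E H. rewrite <- E. apply rep_C, H. Qed.

(* A word [s_1; ...; s_k] of representatives stands for the product s_1 ... s_k; multiplying it
   on the left by g and renormalising letter by letter pushes a C-factor to the right. *)
Fixpoint lmul_word (g : G) (l : list G) : list G :=
  match l with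
  | [] => []
  | s :: l' => rep (g ⋅ s) :: lmul_word (ginv (rep (g ⋅ s)) ⋅ (g ⋅ s)) l'
  end.

Fixpoint word_prod (l : list G) : G := match l with [] => 1 | s :: l' => s ⋅ word_prod l' end.

Definition all_reps (l : list G) : Prop := Forall (fun s => rep s = s) l.
Definition avoids_C (l : list G) : Prop := Forall (fun s => ~ C s) l.

Fixpoint alt_AB (l : list G) : Prop :=
  match l with [] => True | s :: l' => A s /\ alt_BA l' end
with alt_BA (l : list G) : Prop :=
  match l with [] => False | s :: l' => B s /\ alt_AB l' end.

Lemma lmul_word_length g l : length (lmul_word g l) = length l.
Proof. revert g; induction l; intro g; simpl; auto. Qed.

Lemma lmul_wordM g h l : lmul_word g (lmul_word h l) = lmul_word (g ⋅ h) l.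
Proof.
  revert g h; induction l as [|s l IH]; intros g h; simpl; auto.
  assert (E : rep (g ⋅ rep (h ⋅ s)) = rep (g ⋅ h ⋅ s)).
  { replace (g ⋅ rep (h ⋅ s)) with (g ⋅ h ⋅ s ⋅ (ginv (h ⋅ s) ⋅ rep (h ⋅ s)))
      by (gsimpl; reflexivity).
    apply rep_mulC, rep_coset. }
  rewrite E, IH. f_equal. f_equal. gsimpl. reflexivity.
Qed.

Lemma all_reps_lmul_word g l : all_reps (lmul_word g l).
Proof. revert g; induction l as [|s l IH]; intro g; constructor; [apply rep_idem|apply IH]. Qed.

Lemma lmul_word1 l : all_reps l -> lmul_word 1 l = l.
Proof.
  induction l as [|s l IH]; intro H; simpl; auto.
  inversion H as [|? ? Hs Hl]; subst. rewrite gmul1, Hs, gmulV, IH; auto.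
Qed.

Lemma avoids_C_lmul_word c l : C c -> avoids_C l -> avoids_C (lmul_word c l).
Proof.
  revert c; induction l as [|s l IH]; intros c Hc H; simpl; constructor;
    inversion H as [|? ? Hs Hl]; subst.
  - apply rep_notC. intro Hm. apply Hs. exact (C_mul_l c s Hc Hm).
  - apply IH; [apply rep_cosetV|exact Hl].
Qed.

Lemma tail_avoids_C_lmul_word g l : avoids_C (tl l) -> avoids_C (tl (lmul_word g l)).
Proof. destruct l as [|s l]; simpl; auto. apply avoids_C_lmul_word, rep_cosetV. Qed.

Lemma alt_lmul_word_C l : forall c, C c ->
  (alt_AB l -> alt_AB (lmul_word c l)) /\ (alt_BA l -> alt_BA (lmul_word c l)).
Proof.
  induction l as [|s l IH]; intros c [HcA HcB]; simpl; split; auto;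
    intros [Hs Hl]; (split; [|apply IH; auto; apply rep_cosetV]).
  - apply rep_A, A_mul; auto.
  - apply rep_B, B_mul; auto.
Qed.

Lemma alt_AB_lmul_word g l : A g -> alt_AB l -> alt_AB (lmul_word g l).
Proof.
  intros Hg H. destruct l as [|s l]; simpl in *; auto. destruct H as [Hs Hl].
  split; [apply rep_A, A_mul; auto|]. apply alt_lmul_word_C; auto. apply rep_cosetV.
Qed.

Lemma alt_BA_lmul_word g l : B g -> alt_BA l -> alt_BA (lmul_word g l).
Proof.
  intros Hg H. destruct l as [|s l]; simpl in *; auto. destruct H as [Hs Hl].
  split; [apply rep_B, B_mul; auto|]. apply alt_lmul_word_C; auto. apply rep_cosetV.
Qed.

Lemma word_prod_lmul_word_A g l : A g ->
  exists a, A a /\ word_prod (lmul_word g l) = g ⋅ word_prod l ⋅ a.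
Proof.
  revert g; induction l as [|s l IH]; intros g Hg; simpl.
  - exists (ginv g). split; [apply A_inv, Hg|]. gsimpl. reflexivity.
  - destruct (IH (ginv (rep (g ⋅ s)) ⋅ (g ⋅ s))) as [a [Ha E]]; [apply rep_cosetV|].
    exists a. split; auto. rewrite E. gsimpl. reflexivity.
Qed.

Lemma word_prod_lmul_word_cons g s l :
  exists a, A a /\ word_prod (lmul_word g (s :: l)) = g ⋅ word_prod (s :: l) ⋅ a.
Proof.
  simpl. destruct (word_prod_lmul_word_A (ginv (rep (g ⋅ s)) ⋅ (g ⋅ s)) l) as [a [Ha E]];
    [apply rep_cosetV|].
  exists a. split; auto. rewrite E. gsimpl. reflexivity.
Qed.

Lemma lcp_lmul_word g l l' : all_reps l -> all_reps l' ->
  lcp (lmul_word g l) (lmul_word g l') = lcp l l'.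
Proof.
  revert g l'; induction l as [|s r IH]; intros g [|s' r'] H H'; simpl; auto.
  inversion H; inversion H'; subst.
  destruct (pdec (s = s')) as [<-|E].
  - destruct (pdec (rep (g ⋅ s) = rep (g ⋅ s))) as [_|n]; [|congruence].
    f_equal. apply IH; auto.
  - destruct (pdec (rep (g ⋅ s) = rep (g ⋅ s'))) as [E'|_]; auto.
    exfalso. apply E, (rep_inj_mul g); auto.
Qed.

Lemma word_dist_lmul_word g l l' : all_reps l -> all_reps l' ->
  word_dist (lmul_word g l) (lmul_word g l') = word_dist l l'.
Proof. intros. unfold word_dist. rewrite lcp_lmul_word, !lmul_word_length; auto. Qed.

(* B acts on words read from a B-letter; adding or removing a leading trivial letter switches
   between the two readings of a word. *)
Definition flip_word (l : list G) : list G :=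
  match l with
  | s :: r => if pdec (C s) then r else 1 :: l
  | [] => [1]
  end.

Definition head_avoids_C (l : list G) : Prop := forall s r, l = s :: r -> ~ C s.

Lemma head_avoids_C_of r : avoids_C r -> head_avoids_C r.
Proof. intros H s r' ->. inversion H; assumption. Qed.

Lemma flip_word_1 r : flip_word (1 :: r) = r.
Proof. simpl. destruct (pdec (C 1)) as [_|n]; [reflexivity|exfalso; apply n, C_one]. Qed.

Lemma flip_word_head_avoids l : head_avoids_C l -> flip_word l = 1 :: l.
Proof.
  destruct l as [|s r]; [reflexivity|]. intro H. simpl.
  destruct (pdec (C s)) as [Hs|]; [exfalso; exact (H s r eq_refl Hs)|reflexivity].
Qed.

Lemma flip_word_cases l : all_reps l ->
  (exists r, l = 1 :: r /\ flip_word l = r) \/ (head_avoids_C l /\ flip_word l = 1 :: l).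
Proof.
  intro HR. destruct (pdec (head_avoids_C l)) as [H|H].
  - right. split; [exact H|apply flip_word_head_avoids, H].
  - left. destruct l as [|s r]; [exfalso; apply H; intros ? ? E; discriminate|].
    inversion HR as [|? ? Hs _]; subst.
    assert (HC : C s) by (apply NNPP; intro Hn; apply H; intros ? ? E; injection E as <- _; exact Hn).
    exists r. rewrite (rep_fixed_C s Hs HC). split; [reflexivity|apply flip_word_1].
Qed.

Lemma flip_wordK l : all_reps l -> avoids_C (tl l) -> flip_word (flip_word l) = l.
Proof.
  intros HR HN. destruct (flip_word_cases l HR) as [[r [-> ->]]|[_ ->]].
  - apply flip_word_head_avoids, head_avoids_C_of, HN.
  - apply flip_word_1.
Qed.

Lemma all_reps_flip_word l : all_reps l -> all_reps (flip_word l).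
Proof.
  intro HR. destruct (flip_word_cases l HR) as [[r [-> ->]]|[_ ->]].
  - inversion HR; assumption.
  - constructor; [apply rep_C, C_one|exact HR].
Qed.

Lemma tail_avoids_C_flip_word l : all_reps l -> avoids_C (tl l) -> avoids_C (tl (flip_word l)).
Proof.
  intros HR HN. destruct (flip_word_cases l HR) as [[r [-> ->]]|[Hh ->]].
  - destruct r; simpl in *; [constructor|inversion HN; assumption].
  - destruct l as [|s r]; simpl in *; constructor; [exact (Hh s r eq_refl)|exact HN].
Qed.

Lemma alt_BA_flip_word l : all_reps l -> alt_AB l -> alt_BA (flip_word l).
Proof.
  intros HR H. destruct (flip_word_cases l HR) as [[r [-> ->]]|[_ ->]].
  - apply H.
  - split; [apply B_one|exact H].
Qed.

Lemma alt_AB_flip_word l : all_reps l -> alt_BA l -> alt_AB (flip_word l).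
Proof.
  intros HR H. destruct (flip_word_cases l HR) as [[r [-> ->]]|[_ ->]].
  - apply H.
  - split; [apply A_one|exact H].
Qed.

Lemma word_prod_flip_word l : all_reps l -> word_prod (flip_word l) = word_prod l.
Proof.
  intro HR. destruct (flip_word_cases l HR) as [[r [-> ->]]|[_ ->]]; simpl; rewrite gmul1; reflexivity.
Qed.

Lemma head_avoids_C_neq1 l : head_avoids_C l -> forall s r, l = s :: r -> s <> 1.
Proof. intros H s r E ->. exact (H 1 r E C_one). Qed.

Lemma word_dist_flip_mixed r l' : avoids_C r -> head_avoids_C l' ->
  word_dist r (1 :: l') = word_dist (1 :: r) l'.
Proof.
  intros Hr Hl'.
  rewrite (word_dist_head_neq r), (word_dist_head_neq (1 :: r)); [simpl; lia| |].
  - intros ? ? s' r' [= <- _] E. apply not_eq_sym, (head_avoids_C_neq1 l' Hl' s' r' E).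
  - intros s r0 ? ? E [= <- _]. exact (head_avoids_C_neq1 r (head_avoids_C_of r Hr) s r0 E).
Qed.

Lemma word_dist_flip_word l l' : all_reps l -> all_reps l' ->
  avoids_C (tl l) -> avoids_C (tl l') -> word_dist (flip_word l) (flip_word l') = word_dist l l'.
Proof.
  intros R R' N N'.
  destruct (flip_word_cases l R) as [[r [-> ->]]|[Hh ->]];
    destruct (flip_word_cases l' R') as [[r' [-> ->]]|[Hh' ->]].
  - rewrite word_dist_cons. reflexivity.
  - apply word_dist_flip_mixed; assumption.
  - rewrite word_distC, (word_distC l). apply word_dist_flip_mixed; assumption.
  - apply word_dist_cons.
Qed.

Lemma lmul_word_C_1 c r : C c -> lmul_word c (1 :: r) = 1 :: lmul_word c r.
Proof. intro Hc. simpl. rewrite mulg1, rep_C, invg1, gmul1 by exact Hc. reflexivity. Qed.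

Lemma flip_lmul_word_C c l : C c -> all_reps l -> avoids_C (tl l) ->
  flip_word (lmul_word c (flip_word l)) = lmul_word c l.
Proof.
  intros Hc R N. destruct (flip_word_cases l R) as [[r [-> ->]]|[_ ->]].
  - rewrite lmul_word_C_1 by exact Hc.
    apply flip_word_head_avoids, head_avoids_C_of, avoids_C_lmul_word; assumption.
  - rewrite lmul_word_C_1 by exact Hc. apply flip_word_1.
Qed.

Definition vertex_word (l : list G) : Prop := all_reps l /\ avoids_C (tl l) /\ alt_AB l.

Definition bmul_word (b : G) (l : list G) : list G := flip_word (lmul_word b (flip_word l)).

Lemma vertex_word_lmul a l : A a -> vertex_word l -> vertex_word (lmul_word a l).
Proof.
  intros Ha [R [N T]]. split; [|split].
  - apply all_reps_lmul_word.
  - apply tail_avoids_C_lmul_word, N.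
  - apply alt_AB_lmul_word; assumption.
Qed.

Lemma vertex_word_bmul b l : B b -> vertex_word l -> vertex_word (bmul_word b l).
Proof.
  intros Hb [R [N T]]. unfold bmul_word. split; [|split].
  - apply all_reps_flip_word, all_reps_lmul_word.
  - apply tail_avoids_C_flip_word; [apply all_reps_lmul_word|].
    apply tail_avoids_C_lmul_word, tail_avoids_C_flip_word; assumption.
  - apply alt_AB_flip_word; [apply all_reps_lmul_word|].
    apply alt_BA_lmul_word, alt_BA_flip_word; assumption.
Qed.

Lemma bmul_wordM b b' l : vertex_word l -> bmul_word b (bmul_word b' l) = bmul_word (b ⋅ b') l.
Proof.
  intros [R [N T]]. unfold bmul_word. rewrite flip_wordK, lmul_wordM; [reflexivity| |].
  - apply all_reps_lmul_word.
  - apply tail_avoids_C_lmul_word, tail_avoids_C_flip_word; assumption.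
Qed.

Lemma bmul_word1 l : vertex_word l -> bmul_word 1 l = l.
Proof.
  intros [R [N T]]. unfold bmul_word.
  rewrite lmul_word1 by (apply all_reps_flip_word, R). apply flip_wordK; assumption.
Qed.

Lemma word_dist_bmul_word b l l' : vertex_word l -> vertex_word l' ->
  word_dist (bmul_word b l) (bmul_word b l') = word_dist l l'.
Proof.
  intros [R [N T]] [R' [N' T']]. unfold bmul_word.
  rewrite word_dist_flip_word, word_dist_lmul_word, word_dist_flip_word; auto;
    try apply all_reps_flip_word; try apply all_reps_lmul_word;
    try apply tail_avoids_C_lmul_word; try apply tail_avoids_C_flip_word; auto.
Qed.

Lemma word_prod_bmul_word b l : vertex_word l ->
  exists a, A a /\ word_prod (bmul_word b l) = b ⋅ word_prod l ⋅ a.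
Proof.
  intros [R [N T]]. unfold bmul_word.
  rewrite word_prod_flip_word by apply all_reps_lmul_word.
  destruct (flip_word l) as [|s r] eqn:Ef.
  - exfalso. destruct (flip_word_cases l R) as [[r [-> E]]|[_ E]]; rewrite E in Ef;
      [subst r; exact (proj2 T)|discriminate].
  - rewrite <- (word_prod_flip_word l R), Ef. apply word_prod_lmul_word_cons.
Qed.

Lemma bmul_word_C c l : C c -> vertex_word l -> bmul_word c l = lmul_word c l.
Proof. intros Hc [R [N _]]. apply flip_lmul_word_C; assumption. Qed.

(* p moves the first letter of every nonempty vertex word. *)
Lemma word_dist_lmul_rotation p l : (forall a, A a -> ~ C (gconj p a)) ->
  vertex_word l -> word_dist l (lmul_word p l) = length l + length l.
Proof.
  intros Hp [R [_ T]]. rewrite word_dist_head_neq, lmul_word_length; [reflexivity|].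
  intros s r s' r' -> [= Es _]. inversion R as [|? ? Hs _]; subst.
  intro E. apply (Hp s (proj1 T)). apply rep_eq_C. rewrite Hs. exact E.
Qed.

Definition Vertex : Type := {l : list G | vertex_word l}.
Definition vdist (x y : Vertex) : nat := word_dist (proj1_sig x) (proj1_sig y).

Lemma Vertex_eq (x y : Vertex) : proj1_sig x = proj1_sig y -> x = y.
Proof. destruct x, y; simpl; intros ->; f_equal; apply proof_irrelevance. Qed.

(* [ilabel] is the element of G that the isometry realises on the cosets (word_prod w) A; it is
   what lets the universal property show that the stabiliser of the empty word lies in A. *)
Record isom := Isom {
  ifun : Vertex -> Vertex;
  iinv : Vertex -> Vertex;
  ifunK : forall x, ifun (iinv x) = x;
  iinvK : forall x, iinv (ifun x) = x;
  ifun_dist : forall x y, vdist (ifun x) (ifun y) = vdist x y;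
  ilabel : G;
  ilabel_spec : forall x,
    exists a, A a /\ word_prod (proj1_sig (ifun x)) = ilabel ⋅ word_prod (proj1_sig x) ⋅ a }.

Lemma isom_eq (p q : isom) : ifun p = ifun q -> iinv p = iinv q -> ilabel p = ilabel q -> p = q.
Proof. destruct p, q; simpl; intros; subst. f_equal; apply proof_irrelevance. Qed.

Definition isom_mul (p q : isom) : isom.
Proof.
  refine (Isom (fun x => ifun p (ifun q x)) (fun x => iinv q (iinv p x)) _ _ _
    (ilabel p ⋅ ilabel q) _).
  - intro x. rewrite !ifunK. reflexivity.
  - intro x. rewrite !iinvK. reflexivity.
  - intros x y. rewrite !ifun_dist. reflexivity.
  - intro x. destruct (ilabel_spec q x) as [a1 [H1 E1]].
    destruct (ilabel_spec p (ifun q x)) as [a2 [H2 E2]].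
    exists (a1 ⋅ a2). split; [apply A_mul; auto|]. rewrite E2, E1. gsimpl. reflexivity.
Defined.

Definition isom_one : isom.
Proof.
  refine (Isom (fun x => x) (fun x => x) _ _ _ 1 _); auto.
  intro x. exists 1. split; [apply A_one|]. gsimpl. reflexivity.
Defined.

Definition isom_inv (p : isom) : isom.
Proof.
  refine (Isom (iinv p) (ifun p) (iinvK p) (ifunK p) _ (ginv (ilabel p)) _).
  - intros x y. rewrite <- (ifun_dist p), !ifunK. reflexivity.
  - intro x. destruct (ilabel_spec p (iinv p x)) as [a [Ha E]]. rewrite ifunK in E.
    exists (ginv a). split; [apply A_inv, Ha|]. rewrite E. gsimpl. reflexivity.
Defined.

Lemma isom_mulA p q r : isom_mul p (isom_mul q r) = isom_mul (isom_mul p q) r.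
Proof. apply isom_eq; simpl; auto. apply gmulA. Qed.

Lemma isom_mul1 p : isom_mul isom_one p = p.
Proof. apply isom_eq; simpl; auto. apply gmul1. Qed.

Lemma isom_mulV p : isom_mul (isom_inv p) p = isom_one.
Proof.
  apply isom_eq; simpl; try apply gmulV;
    apply functional_extensionality; intro; apply iinvK.
Qed.

Definition IsomGroup : Group := Build_Group isom isom_mul isom_one isom_inv isom_mulA isom_mul1 isom_mulV.

Definition isomA_of (a : G) (Ha : A a) : isom.
Proof.
  refine (Isom (fun x => exist _ (lmul_word a (proj1_sig x)) (vertex_word_lmul a _ Ha (proj2_sig x)))
    (fun x => exist _ (lmul_word (ginv a) (proj1_sig x))
                (vertex_word_lmul (ginv a) _ (A_inv a Ha) (proj2_sig x)))
    _ _ _ a _).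
  - intro x. apply Vertex_eq. simpl. rewrite lmul_wordM, mulgV. apply lmul_word1, (proj2_sig x).
  - intro x. apply Vertex_eq. simpl. rewrite lmul_wordM, gmulV. apply lmul_word1, (proj2_sig x).
  - intros [l [R ?]] [l' [R' ?]]. apply word_dist_lmul_word; assumption.
  - intro x. apply word_prod_lmul_word_A, Ha.
Defined.

Definition isomB_of (b : G) (Hb : B b) : isom.
Proof.
  refine (Isom (fun x => exist _ (bmul_word b (proj1_sig x)) (vertex_word_bmul b _ Hb (proj2_sig x)))
    (fun x => exist _ (bmul_word (ginv b) (proj1_sig x))
                (vertex_word_bmul (ginv b) _ (B_inv b Hb) (proj2_sig x)))
    _ _ _ b _).
  - intro x. apply Vertex_eq. simpl. rewrite bmul_wordM, mulgV by apply (proj2_sig x).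
    apply bmul_word1, (proj2_sig x).
  - intro x. apply Vertex_eq. simpl. rewrite bmul_wordM, gmulV by apply (proj2_sig x).
    apply bmul_word1, (proj2_sig x).
  - intros [l Hl] [l' Hl']. apply word_dist_bmul_word; assumption.
  - intros [l Hl]. apply word_prod_bmul_word, Hl.
Defined.

Definition isomA (g : G) : IsomGroup :=
  match pdec (A g) with left H => isomA_of g H | right _ => isom_one end.
Definition isomB (g : G) : IsomGroup :=
  match pdec (B g) with left H => isomB_of g H | right _ => isom_one end.

Lemma isomA_E g (H : A g) : isomA g = isomA_of g H.
Proof.
  unfold isomA. destruct (pdec (A g)) as [H'|]; [|contradiction].
  f_equal. apply proof_irrelevance.
Qed.

Lemma isomB_E g (H : B g) : isomB g = isomB_of g H.
Proof.
  unfold isomB. destruct (pdec (B g)) as [H'|]; [|contradiction].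
  f_equal. apply proof_irrelevance.
Qed.

Lemma isomA_mul x y : A x -> A y -> isomA (x ⋅ y) = @gmul IsomGroup (isomA x) (isomA y).
Proof.
  intros Hx Hy. rewrite (isomA_E x Hx), (isomA_E y Hy), (isomA_E (x ⋅ y) (A_mul x y Hx Hy)).
  apply isom_eq; simpl; [| |reflexivity]; apply functional_extensionality; intro z;
    apply Vertex_eq; simpl; rewrite lmul_wordM; [|rewrite invMg]; reflexivity.
Qed.

Lemma isomB_mul x y : B x -> B y -> isomB (x ⋅ y) = @gmul IsomGroup (isomB x) (isomB y).
Proof.
  intros Hx Hy. rewrite (isomB_E x Hx), (isomB_E y Hy), (isomB_E (x ⋅ y) (B_mul x y Hx Hy)).
  apply isom_eq; simpl; [| |reflexivity]; apply functional_extensionality; intro z;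
    apply Vertex_eq; simpl; rewrite bmul_wordM by apply (proj2_sig z);
    [|rewrite invMg]; reflexivity.
Qed.

Lemma isomA_isomB c : A c -> B c -> isomA c = isomB c.
Proof.
  intros Ha Hb. rewrite (isomA_E c Ha), (isomB_E c Hb).
  apply isom_eq; simpl; [| |reflexivity]; apply functional_extensionality; intro z;
    apply Vertex_eq; simpl; symmetry; apply bmul_word_C; try apply (proj2_sig z).
  - split; assumption.
  - apply C_inv. split; assumption.
Qed.

Lemma amalgam_isom_rep : is_amalgamated_free_product G A B ->
  exists h : G -> IsomGroup, is_hom h /\ (forall a (Ha : A a), h a = isomA_of a Ha) /\
    (forall x, ilabel (h x) = x).
Proof.
  intros [_ [_ UP]].
  destruct (UP IsomGroup isomA isomB isomA_mul isomB_mul isomA_isomB) as [h [Hh [HhA [HhB _]]]].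
  destruct (UP G (fun x => x) (fun x => x) (fun _ _ _ _ => eq_refl) (fun _ _ _ _ => eq_refl)
              (fun _ _ _ => eq_refl)) as [id [_ [_ [_ Uniq]]]].
  exists h. split; [exact Hh|split].
  - intros a Ha. rewrite HhA, (isomA_E a Ha) by exact Ha. reflexivity.
  - (* Both the identity and ilabel ∘ h extend the inclusions of A and B. *)
    intro x. rewrite (Uniq (fun x => ilabel (h x))).
    + symmetry. apply (Uniq (fun x => x)); auto. intros ? ?. reflexivity.
    + intros ? ?. rewrite Hh. reflexivity.
    + intros a Ha. rewrite HhA, (isomA_E a Ha) by exact Ha. reflexivity.
    + intros b Hb. rewrite HhB, (isomB_E b Hb) by exact Hb. reflexivity.
Qed.

Section Action.
Variable h : G -> IsomGroup.
Hypothesis h_hom : is_hom h.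
Hypothesis h_A : forall a (Ha : A a), h a = isomA_of a Ha.
Hypothesis h_label : forall x, ilabel (h x) = x.

Definition vact (g : G) (x : Vertex) : Vertex := ifun (h g) x.

Definition root : Vertex := exist _ [] (conj (Forall_nil _) (conj (Forall_nil _) I)).

Lemma vact_mul g k x : vact (g ⋅ k) x = vact g (vact k x).
Proof. unfold vact. rewrite h_hom. reflexivity. Qed.

Lemma vact1 x : vact 1 x = x.
Proof.
  assert (E : h 1 = isom_one) by (apply (mulg_idem IsomGroup); rewrite <- h_hom, gmul1; reflexivity).
  unfold vact. rewrite E. reflexivity.
Qed.

Lemma vdist_vact g x y : vdist (vact g x) (vact g y) = vdist x y.
Proof. apply ifun_dist. Qed.

Lemma vact_A a x : A a -> proj1_sig (vact a x) = lmul_word a (proj1_sig x).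
Proof. intro Ha. unfold vact. rewrite (h_A a Ha). reflexivity. Qed.

Lemma root_stab g : vact g root = root -> A g.
Proof.
  intro E. destruct (ilabel_spec (h g) root) as [a [Ha Ea]].
  fold (vact g root) in Ea. rewrite E in Ea. simpl in Ea. rewrite h_label, mulg1 in Ea.
  symmetry in Ea. apply eq_invg_mul in Ea. subst a. apply (subgroup_of_inv A g HA Ha).
Qed.

Lemma vact_rotation p : A p -> (forall a, A a -> ~ C (gconj p a)) ->
  forall x, vdist x (vact p x) = vdist root x + vdist root x.
Proof.
  intros Ap Hp [l Hl]. unfold vdist. rewrite (vact_A p _ Ap). simpl.
  rewrite word_dist_nil. apply word_dist_lmul_rotation; assumption.
Qed.

Lemma amalgam_conjugators_in_A (P : G -> Prop) (HP : normal_subsemigroup A P)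
  (HPC : forall x, P x -> ~ C x) L z :
  all_P G P L -> A (cprod G L) -> In z L -> A (fst z).
Proof.
  intros HL HAL.
  destruct HP as [P_A [P_mul P_conj]].
  apply (cprod_fix_conjugators_in_A G A P P_mul P_conj Vertex vact vact_mul vact1 vdist
    (fun x y => word_distC _ _) (fun x => word_dist_xx _)
    (fun x y E => Vertex_eq x y (word_dist_eq0 _ _ E)) (fun x y z => word_dist_tri _ _ _)
    (fun x y z w => word_dist_four _ _ _ _) vdist_vact root root_stab); auto.
  - intros p Pp. apply vact_rotation; [apply P_A, Pp|]. intros a Ha. apply HPC, P_conj; assumption.
  - apply Vertex_eq. rewrite (vact_A _ _ HAL). reflexivity.
Qed.

End Action.
End NormalForms.

Lemma cprod_iprod (G : Group) (n : nat) (d f : nat -> G) :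
  cprod G (map (fun i => (f i, d i)) (seq 0 n)) = iprod n (fun i => gconj (d i) (f i)).
Proof.
  induction n as [|n IH]; [reflexivity|].
  rewrite seq_S, map_app, cprod_app, IH. simpl. rewrite mulg1. reflexivity.
Qed.

Theorem mainTheorem16 (G : Group) (A B P : G -> Prop)
  (HG : is_amalgamated_free_product G A B)
  (HP : normal_subsemigroup A P)
  (HPC : forall x, P x -> ~ (A x /\ B x))
  (n : nat) (d f : nat -> G)
  (Hn : 1 <= n)
  (Hd : forall i, i < n -> P (d i))
  (Hf : forall i, i < n -> ~ A (f i)) :
  ~ A (iprod n (fun i => gconj (d i) (f i))).
Proof.
  intro Hprod.
  pose proof HG as [HA [HB _]].
  destruct (amalgam_isom_rep G A B HA HB HG) as [h [h_hom [h_A h_label]]].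
  set (L := map (fun i => (f i, d i)) (seq 0 n)).
  assert (HL : all_P G P L).
  { apply Forall_forall. intros z Hz. apply in_map_iff in Hz as [i [<- Hi]].
    apply in_seq in Hi. apply Hd. lia. }
  assert (H0 : In (f 0, d 0) L) by (apply in_map_iff; exists 0; split; [|apply in_seq]; auto; lia).
  assert (HAL : A (cprod G L)) by (unfold L; rewrite cprod_iprod; exact Hprod).
  apply (Hf 0); [lia|].
  exact (amalgam_conjugators_in_A G A B HA HB h h_hom h_A h_label P HP HPC L _ HL HAL H0).
Qed.
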